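(* Let $K\ge L\ge T\ge 2$, let $x$ be a positive integer coprime to $q$, and let $\mathrm{CAT}_x(K,L,T)$, $y$, $q$ be as in the context. Suppose that $ix\not\equiv jy\pmod q$ for all integer pairs $(i,j)$ with (1) $i\in\{-L,\dots,-1\}$, $j\in\{-K-T+2,\dots,K-1\}$, or (2) $i\in\{-L+1,\dots,T+L-2\}$, $j\in\{-K,\dots,-1\}$, or (3) $i\in\{-L,\dots,T-2\}$, $j\in\{-K-T+1,\dots,-1\}$. Then $|\mathcal{TL}|=KL$ and $\mathcal{TL}\cap\mathcal{TR}=\mathcal{TL}\cap\mathcal{BL}=\mathcal{TL}\cap\mathcal{BR}=\emptyset$.
   Context: Let $\kappa,\lambda$ be the smallest non-negative integers such that $K+1+\kappa$ and $L+1+\lambda$ are coprime to $T-1$; $K^\star=K+1+\kappa$, $L^\star=L+1+\lambda$, $\bar T=T-1$, $q=K^\star L^\star+\bar T^2$. For $x$ coprime to $q$, $y\in\{0,\dots,q-1\}$ is the unique integer with $x\bar T+yK^\star\equiv0\pmod q$. $\mathrm{CAT}_x(K,L,T)$ consists of $q$ and the vectors over $\mathbb{Z}_q$: $\boldsymbol{\alpha}^{(p)}=(ky)_{k=0}^{K-1}$, $\boldsymbol{\alpha}^{(s)}=(Ky+kx)_{k=0}^{T-1}$, $\boldsymbol{\beta}^{(p)}=(kx)_{k=0}^{L-1}$, $\boldsymbol{\beta}^{(s)}=(ky-x)_{k=0}^{T-1}$, all mod $q$. With $\{\mathbf v\}$ the set of entries and sumsets in $\mathbb{Z}_q$: $\mathcal{TL}=\{\boldsymbol{\alpha}^{(p)}\}+\{\boldsymbol{\beta}^{(p)}\}$,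 $\mathcal{TR}=\{\boldsymbol{\alpha}^{(p)}\}+\{\boldsymbol{\beta}^{(s)}\}$, $\mathcal{BL}=\{\boldsymbol{\alpha}^{(s)}\}+\{\boldsymbol{\beta}^{(p)}\}$, $\mathcal{BR}=\{\boldsymbol{\alpha}^{(s)}\}+\{\boldsymbol{\beta}^{(s)}\}$. *)

From HB Require Import structures.
From mathcomp Require Import all_boot all_order all_algebra.
Set Implicit Arguments. Unset Strict Implicit. Unset Printing Implicit Defensive.
Import Order.TTheory GRing.Theory Num.Theory.

(* Smallest k >= 0 with coprime (n + k) m.  For m >= 1 the value k = n*(m-1)+1
   works (n + k = n*m + 1), and it lies below the search bound, so [find]
   returns the true minimum. *)
Definition least_coprime_shift (n m : nat) : nat :=
  find (fun k => coprime (n + k) m) (iota 0 (n * m).+2).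

Definition kappa (K T : nat) : nat := least_coprime_shift K.+1 T.-1.
Definition lambda (L T : nat) : nat := least_coprime_shift L.+1 T.-1.
Definition Kstar (K T : nat) : nat := K.+1 + kappa K T.
Definition Lstar (L T : nat) : nat := L.+1 + lambda L T.
Definition Tbar (T : nat) : nat := T.-1.
Definition qmod (K L T : nat) : nat := Kstar K T * Lstar L T + Tbar T ^ 2.

Definition yval (K L T x : nat) : nat :=
  find (fun y => (x * Tbar T + y * Kstar K T) %% qmod K L T == 0)%N
       (iota 0 (qmod K L T)).

Local Open Scope ring_scope.

Definition alpha_p (K L T x : nat) : seq int :=
  [seq ((k%:Z * (yval K L T x)%:Z) %% (qmod K L T)%:Z)%Z | k <- iota 0 K].
Definition alpha_s (K L T x : nat) : seq int :=
  [seq ((K%:Z * (yval K L T x)%:Z + k%:Z * x%:Z) %% (qmod K L T)%:Z)%Z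
  | k <- iota 0 T].
Definition beta_p (K L T x : nat) : seq int :=
  [seq ((k%:Z * x%:Z) %% (qmod K L T)%:Z)%Z | k <- iota 0 L].
Definition beta_s (K L T x : nat) : seq int :=
  [seq ((k%:Z * (yval K L T x)%:Z - x%:Z) %% (qmod K L T)%:Z)%Z
  | k <- iota 0 T].

(* sumset in Z_q of the entry sets of two vectors (as a list; duplicates
   are irrelevant: cardinality is taken after [undup]) *)
Definition sumset (q : nat) (A B : seq int) : seq int :=
  [seq ((a + b) %% q%:Z)%Z | a <- A, b <- B].

Definition TL K L T x := sumset (qmod K L T) (alpha_p K L T x) (beta_p K L T x).
Definition TR K L T x := sumset (qmod K L T) (alpha_p K L T x) (beta_s K L T x).
Definition BL K L T x := sumset (qmod K L T) (alpha_s K L T x) (beta_p K L T x).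
Definition BR K L T x := sumset (qmod K L T) (alpha_s K L T x) (beta_s K L T x).

Definition disj (A B : seq int) : Prop := forall z, z \in A -> z \notin B.

From HB Require Import structures.
From mathcomp Require Import all_boot all_order all_algebra.
From mathcomp Require Import ring zify.
Import Order.TTheory GRing.Theory Num.Theory.
Set Implicit Arguments. Unset Strict Implicit. Unset Printing Implicit Defensive.
Local Open Scope ring_scope.

(* Every entry of the four sumsets is the residue mod q of a linear form
   a*y + b*x whose integer coefficients range over an explicit box:
   k*y + l*x for TL, (k+l)*y - x for TR, K*y + (k+l)*x for BL and
   (K+l)*y + (k-1)*x for BR.  Two such residues coincide only if
   (b - b')*x = (a' - a)*y (mod q), and for TL against each block the pair
   (b - b', a' - a) lies in one of the three excluded ranges (for TL against
   itself after possibly exchanging the two elements). *)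

Lemma map_allpairs (S T R U : Type) (g : R -> U) (f : S -> T -> R) s t :
  map g [seq f a b | a <- s, b <- t] = [seq g (f a b) | a <- s, b <- t].
Proof. by elim: s => //= a s IHs; rewrite map_cat IHs -map_comp. Qed.

Lemma sumset_map_modz (q : nat) (I J : Type) (f : I -> int) (g : J -> int) s t :
  sumset q [seq (f i %% q%:Z)%Z | i <- s] [seq (g j %% q%:Z)%Z | j <- t]
  = [seq ((f i + g j) %% q%:Z)%Z | i <- s, j <- t].
Proof.
by rewrite /sumset allpairs_mapl allpairs_mapr; apply: eq_allpairs => i j; apply: modzDm.
Qed.

Definition lin_mod (q x y : int) (c : int * int) : int := ((c.1 * y + c.2 * x) %% q)%Z.

Lemma lin_mod_eq (q x y : int) (c d : int * int) :
  lin_mod q x y c = lin_mod q x y d -> ((c.2 - d.2) * x == (d.1 - c.1) * y %[mod q])%Z.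
Proof.
rewrite /lin_mod => /eqP; rewrite !eqz_mod_dvd.
suff -> : (c.2 - d.2) * x - (d.1 - c.1) * y = (c.1 * y + c.2 * x) - (d.1 * y + d.2 * x) by [].
by ring.
Qed.

Lemma eqz_modNN (q a b : int) : (- a == - b %[mod q])%Z = (a == b %[mod q])%Z.
Proof. by rewrite !eqz_mod_dvd -opprD rpredN. Qed.

Lemma disj_map_lin_mod (q x y : int) (C D : seq (int * int)) :
  {in C & D, forall c d, ~~ ((d.2 - c.2) * x == (c.1 - d.1) * y %[mod q])%Z} ->
  disj (map (lin_mod q x y) C) (map (lin_mod q x y) D).
Proof.
move=> noCD _ /mapP[c Cc ->]; apply/mapP => -[d Dd /esym/lin_mod_eq].
exact/negP/noCD.
Qed.

Lemma uniq_map_lin_mod (q x y : int) (C : seq (int * int)) : uniq C ->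
  {in C &, forall c d, c != d -> ~~ ((c.2 - d.2) * x == (d.1 - c.1) * y %[mod q])%Z} ->
  uniq (map (lin_mod q x y) C).
Proof.
move=> uC noC; rewrite map_inj_in_uniq // => c d Cc Cd /lin_mod_eq.
by apply: contraTeq; apply: noC.
Qed.

Definition TL_coef (K L : nat) : seq (int * int) :=
  [seq (k%:Z, l%:Z) | k <- iota 0 K, l <- iota 0 L].
Definition TR_coef (K T : nat) : seq (int * int) :=
  [seq ((k + l)%:Z, -1) | k <- iota 0 K, l <- iota 0 T].
Definition BL_coef (K L T : nat) : seq (int * int) :=
  [seq (K%:Z, (k + l)%:Z) | k <- iota 0 T, l <- iota 0 L].
Definition BR_coef (K T : nat) : seq (int * int) :=
  [seq ((K + l)%:Z, k%:Z - 1) | k <- iota 0 T, l <- iota 0 T].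

Lemma mem_allpairs_iota (R : eqType) (f : nat -> nat -> R) (m n : nat) (z : R) :
  z \in [seq f k l | k <- iota 0 m, l <- iota 0 n] ->
  exists2 k, (k < m)%N & exists2 l, (l < n)%N & z = f k l.
Proof.
by case/allpairsP=> -[k l] [/=]; rewrite !mem_iota => Hk Hl ->; exists k; last exists l.
Qed.

Lemma uniq_TL_coef (K L : nat) : uniq (TL_coef K L).
Proof.
by apply: allpairs_uniq; rewrite ?iota_uniq // => -[k l] [k' l'] _ _ [-> ->].
Qed.

Lemma size_TL_coef (K L : nat) : size (TL_coef K L) = (K * L)%N.
Proof. by rewrite size_allpairs !size_iota. Qed.

Section CollisionFree.

Variables (K L T : nat) (q x y : int).

Hypothesis no_collision : forall i j : int,
  ((- L%:Z <= i <= -1) && (- K%:Z - T%:Z + 2 <= j <= K%:Z - 1)) ||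
  ((- L%:Z + 1 <= i <= T%:Z + L%:Z - 2) && (- K%:Z <= j <= -1)) ||
  ((- L%:Z <= i <= T%:Z - 2) && (- K%:Z - T%:Z + 1 <= j <= -1)) ->
  (i * x != j * y %[mod q])%Z.

Lemma no_collision1 (i j : int) :
  - L%:Z <= i <= -1 -> - K%:Z - T%:Z + 2 <= j <= K%:Z - 1 -> (i * x != j * y %[mod q])%Z.
Proof. by move=> Hi Hj; apply: no_collision; rewrite Hi Hj. Qed.

Lemma no_collision2 (i j : int) :
  - L%:Z + 1 <= i <= T%:Z + L%:Z - 2 -> - K%:Z <= j <= -1 -> (i * x != j * y %[mod q])%Z.
Proof. by move=> Hi Hj; apply: no_collision; rewrite Hi Hj orbT. Qed.

Lemma no_collision3 (i j : int) :
  - L%:Z <= i <= T%:Z - 2 -> - K%:Z - T%:Z + 1 <= j <= -1 -> (i * x != j * y %[mod q])%Z.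
Proof. by move=> Hi Hj; apply: no_collision; rewrite Hi Hj !orbT. Qed.

Lemma uniq_TL_image : (0 < T)%N -> uniq (map (lin_mod q x y) (TL_coef K L)).
Proof.
move=> T_gt0; apply: uniq_map_lin_mod; first exact: uniq_TL_coef.
move=> _ _ /mem_allpairs_iota[k Hk [l Hl ->]] /mem_allpairs_iota[k' Hk' [l' Hl' ->]] /= neq.
have [lt_ll'|lt_l'l|eq_ll'] := ltngtP l l'.
- by apply: no_collision1; lia.
- by rewrite -eqz_modNN -!mulNr; apply: no_collision1; lia.
have [lt_kk'|lt_k'k|eq_kk'] := ltngtP k k'.
- by rewrite -eqz_modNN -!mulNr; apply: no_collision2; lia.
- by apply: no_collision2; lia.
- by rewrite eq_kk' eq_ll' eqxx in neq.
Qed.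

Lemma disj_TL_TR :
  disj (map (lin_mod q x y) (TL_coef K L)) (map (lin_mod q x y) (TR_coef K T)).
Proof.
apply: disj_map_lin_mod.
move=> _ _ /mem_allpairs_iota[k Hk [l Hl ->]] /mem_allpairs_iota[k' Hk' [l' Hl' ->]] /=.
by apply: no_collision1; lia.
Qed.

Lemma disj_TL_BL :
  disj (map (lin_mod q x y) (TL_coef K L)) (map (lin_mod q x y) (BL_coef K L T)).
Proof.
apply: disj_map_lin_mod.
move=> _ _ /mem_allpairs_iota[k Hk [l Hl ->]] /mem_allpairs_iota[k' Hk' [l' Hl' ->]] /=.
by apply: no_collision2; lia.
Qed.

Lemma disj_TL_BR :
  disj (map (lin_mod q x y) (TL_coef K L)) (map (lin_mod q x y) (BR_coef K T)).
Proof.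
apply: disj_map_lin_mod.
move=> _ _ /mem_allpairs_iota[k Hk [l Hl ->]] /mem_allpairs_iota[k' Hk' [l' Hl' ->]] /=.
by apply: no_collision3; lia.
Qed.

End CollisionFree.

Section SumsetsAsLinearForms.

Variables K L T x : nat.

Local Notation lin := (lin_mod (qmod K L T)%:Z x%:Z (yval K L T x)%:Z).

Lemma TL_lin_mod : TL K L T x = map lin (TL_coef K L).
Proof. by rewrite /TL sumset_map_modz map_allpairs. Qed.

Lemma TR_lin_mod : TR K L T x = map lin (TR_coef K T).
Proof.
rewrite /TR sumset_map_modz map_allpairs; apply: eq_allpairs => k l.
by rewrite /lin_mod /= PoszD; congr (_ %% _)%Z; ring.
Qed.

Lemma BL_lin_mod : BL K L T x = map lin (BL_coef K L T).
Proof.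
rewrite /BL sumset_map_modz map_allpairs; apply: eq_allpairs => k l.
by rewrite /lin_mod /= PoszD; congr (_ %% _)%Z; ring.
Qed.

Lemma BR_lin_mod : BR K L T x = map lin (BR_coef K T).
Proof.
rewrite /BR sumset_map_modz map_allpairs; apply: eq_allpairs => k l.
by rewrite /lin_mod /= PoszD; congr (_ %% _)%Z; ring.
Qed.

End SumsetsAsLinearForms.

Theorem lemma4 (K L T x : nat) :
  (L <= K)%N -> (T <= L)%N -> (2 <= T)%N ->
  (0 < x)%N -> coprime x (qmod K L T) ->
  (forall i j : int,
      ((- L%:Z <= i <= -1) && (- K%:Z - T%:Z + 2 <= j <= K%:Z - 1)) ||
      ((- L%:Z + 1 <= i <= T%:Z + L%:Z - 2) && (- K%:Z <= j <= -1)) ||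
      ((- L%:Z <= i <= T%:Z - 2) && (- K%:Z - T%:Z + 1 <= j <= -1)) ->
      (i * x%:Z != j * (yval K L T x)%:Z %[mod (qmod K L T)%:Z])%Z) ->
  size (undup (TL K L T x)) = (K * L)%N /\
  disj (TL K L T x) (TR K L T x) /\
  disj (TL K L T x) (BL K L T x) /\
  disj (TL K L T x) (BR K L T x).
Proof.
move=> _ _ /ltnW T_gt0 _ _ no_collision.
rewrite TL_lin_mod TR_lin_mod BL_lin_mod BR_lin_mod.
have uniq_TL := uniq_TL_image no_collision T_gt0.
split; first by rewrite undup_id // size_map size_TL_coef.
split; first exact: disj_TL_TR no_collision.
split; first exact: disj_TL_BL no_collision.
exact: disj_TL_BR no_collision.
Qed.
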